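(* Let $1\le k<n$. The map $f_k(S)=(\lambda^{(1)}_i+\lambda^{(2)}_i)_{1\le i\le k}$ restricts to an injection $\Theta(k,2n+1)\to P(n-k,n)$.
   Context: Root system $B_n$: positive roots $e_a\pm e_b$ ($a<b$), $e_a$; simple roots $e_i-e_{i+1}$ ($i<n$), $e_n$; order $\alpha\le\beta$ iff $\beta-\alpha$ is a nonnegative integer combination of simple roots. Base region: roots $e_a\pm e_b$ ($a\le k<b$) and $e_a$ ($a\le k$), with $i$-th row ($1\le i\le k$) consisting of $e_{k+1-i}\pm e_b$ ($b>k$) and $e_{k+1-i}$. Top region: roots $e_a+e_b$ with $a<b\le k$. For $S$ a set of roots, $\lambda^{(1)}_i$ is the number of roots of $S$ in the $i$-th base row and $\lambda^{(2)}_i$ the number of roots of $S$ of the form $e_a+e_{k+1-i}$, $a<k+1-i$. $S$ (contained in the union of the two regions) is a $W^{OG(k,2n+1)}$-diagram if it meets each region in a lower order ideal of that region and, for each top-region root $e_a+e_b$, $e_a+e_b\in S$ whenever $S$ contains more than $2n+1-2k$ roots of the base rows indexed by $a$ and $b$ (rows $k+1-a$ and $k+1-b$) combined, and $e_a+e_b\notin S$ whenever it contains fewer than $2n+1-2k$ of them. $\Theta(k,2n+1)$ is the set of such diagrams. $P(n-k,n)$ is the set of partitions $\gamma=(\gamma_1\ge\dots\ge\gamma_k\ge0)$ with $\gamma_1\le 2n-k$ and $\gamma_i>\gamma_{i+1}$ whenever $\gamma_i>n-k$. *)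

From mathcomp Require Import all_boot all_order all_algebra.
Set Implicit Arguments. Unset Strict Implicit. Unset Printing Implicit Defensive.
Import GRing.Theory Num.Theory.

(* Roots of B_n (1-based indices a, b in {1..n}):
   inl (inl (a,b)) encodes e_a + e_b,
   inl (inr (a,b)) encodes e_a - e_b,
   inr a          encodes e_a.
   Only roots in the base / top regions are ever used (canonical encodings). *)
Definition broot (n : nat) : finType :=
  (('I_n.+1 * 'I_n.+1) + ('I_n.+1 * 'I_n.+1) + 'I_n.+1)%type.

Definition rplus n (a b : 'I_n.+1) : broot n := inl (inl (a, b)).
Definition rminus n (a b : 'I_n.+1) : broot n := inl (inr (a, b)).
Definition rshort n (a : 'I_n.+1) : broot n := inr a.

Definition rvec n (r : broot n) (j : nat) : int :=
  match r with
  | inl (inl (a, b)) => (Posz (j == a) + Posz (j == b))%R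
  | inl (inr (a, b)) => (Posz (j == a) - Posz (j == b))%R
  | inr a => Posz (j == a)
  end.

(* alpha <= beta iff beta - alpha = sum_i c_i alpha_i with c_i in N, where
   alpha_i = e_i - e_{i+1} (i<n), alpha_n = e_n.  The coefficient of e_j in
   sum_i c_i alpha_i is c_j - c_{j-1} (with c_0 = 0). *)
Definition rle n (alpha beta : broot n) : Prop :=
  exists c : nat -> nat, c 0 = 0%N /\
    forall j : nat, (0 < j <= n)%N ->
      (rvec beta j - rvec alpha j = Posz (c j) - Posz (c j.-1))%R.

Definition base_region n k (r : broot n) : bool :=
  match r with
  | inl (inl (a, b)) => (1 <= a <= k)%N && (k < b)%N
  | inl (inr (a, b)) => (1 <= a <= k)%N && (k < b)%N
  | inr a => (1 <= a <= k)%N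
  end.

Definition top_region n k (r : broot n) : bool :=
  match r with
  | inl (inl (a, b)) => (1 <= a)%N && (a < b)%N && (b <= k)%N
  | _ => false
  end.

Definition base_row n k (i : nat) (r : broot n) : bool :=
  match r with
  | inl (inl (a, b)) => (a == k.+1 - i :> nat) && (k < b)%N
  | inl (inr (a, b)) => (a == k.+1 - i :> nat) && (k < b)%N
  | inr a => (a == k.+1 - i :> nat)
  end.

Definition top_col n k (i : nat) (r : broot n) : bool :=
  match r with
  | inl (inl (a, b)) => (1 <= a)%N && (b == k.+1 - i :> nat) && (a < k.+1 - i)%N
  | _ => false
  end.

Definition lambda1 n k (S : {set broot n}) (i : nat) : nat :=
  #|[set r in S | base_row k i r]|.
Definition lambda2 n k (S : {set broot n}) (i : nat) : nat :=
  #|[set r in S | top_col k i r]|.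

Definition lower_ideal_in n (R : pred (broot n)) (S : {set broot n}) : Prop :=
  forall alpha beta : broot n, R alpha -> R beta -> beta \in S ->
    rle alpha beta -> alpha \in S.

Definition is_OG_diagram n k (S : {set broot n}) : Prop :=
  [/\ (forall r, r \in S -> base_region k r || top_region k r),
      lower_ideal_in (base_region k) S,
      lower_ideal_in (top_region k) S &
      forall a b : 'I_n.+1, (1 <= a)%N -> (a < b)%N -> (b <= k)%N ->
        let m := (lambda1 k S (k.+1 - a) + lambda1 k S (k.+1 - b))%N in
        ((2 * n + 1 - 2 * k < m)%N -> rplus a b \in S) /\
        ((m < 2 * n + 1 - 2 * k)%N -> rplus a b \notin S)].

Definition fk n k (S : {set broot n}) : seq nat :=
  [seq (lambda1 k S i + lambda2 k S i)%N | i <- iota 1 k].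

(* P(n-k, n): gamma = (gamma_1 >= ... >= gamma_k >= 0), gamma_1 <= 2n-k,
   gamma_i > gamma_{i+1} whenever gamma_i > n-k.  (0-based seq indices.) *)
Definition in_P n k (g : seq nat) : Prop :=
  [/\ size g = k,
      sorted geq g,
      (nth 0 g 0 <= 2 * n - k)%N &
      forall i : nat, (i.+1 < k)%N -> (n - k < nth 0 g i)%N ->
        (nth 0 g i.+1 < nth 0 g i)%N].

From mathcomp Require Import all_boot all_order all_algebra zify ring.
Set Implicit Arguments.
Unset Strict Implicit.
Unset Printing Implicit Defensive.
Import GRing.Theory Num.Theory.

(* Each base row is a chain for the root order, and so is each top column (of the roots
   e_a + e_b with b fixed).  A lower ideal meets each of them in an initial segment, so a
   diagram is determined by the numbers lambda1_i and lambda2_i.  Comparing adjacent rows and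
   adjacent columns shows that lambda1 is weakly decreasing and lambda2 strictly decreasing
   where it is nonzero, and the top-region rule forces lambda2_i > 0 as soon as
   lambda1_(i+1) + lambda1_i > 2(n-k)+1; together these bounds put f_k(S) in P(n-k,n).
   Conversely, column i is decided by the top-region rule from lambda1 on rows i, ..., k, and
   a larger lambda1_i can only enlarge it; hence lambda1_k, lambda1_(k-1), ... are recovered in
   turn from the sums lambda1_i + lambda2_i. *)

Lemma count_downclosed (P : pred nat) N :
  (forall p, p.+1 < N -> P p.+1 -> P p) ->
  forall p, p < N -> P p = (p < count P (iota 0 N)).
Proof.
elim: N => [//|N IH] Pdown p ltpN.
have IHN := IH (fun q ltq => Pdown q (ltnW ltq)).
have cntN : count P (iota 0 N) <= N by rewrite -[leqRHS](size_iota 0 N) count_size.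
rewrite -[N.+1]addn1 iotaD count_cat /= addn0.
case PN: (P N); last first.
  rewrite addn0; case: (ltngtP p N) => [ltpN'|gtpN|->]; [exact: IHN | lia |].
  by rewrite PN ltnNge cntN.
have {}cntN : count P (iota 0 N) = N.
  case: N IHN Pdown PN cntN {IH ltpN} => [//|N] IHN Pdown PN cntN.
  by apply/eqP; rewrite eqn_leq cntN -IHN //; apply: Pdown.
rewrite cntN addn1 ltpN.
case: (ltngtP p N) => [ltpN'|gtpN|-> //]; last lia.
by rewrite IHN ?cntN.
Qed.

Lemma card_param_count (T : finType) (A : {set T}) (f : nat -> T) (P : pred nat) N :
  {in gtn N &, injective f} ->
  (forall r, r \in A <-> exists p, [/\ p < N, r = f p & P p]) ->
  #|A| = count P (iota 0 N).
Proof.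
move=> f_inj defA.
have -> : A = [set f (nat_of_ord p) | p : 'I_N in [set p : 'I_N | P p]].
  apply/setP => r; apply/idP/imsetP.
  - by case/defA => p [ltpN -> Pp]; exists (Ordinal ltpN); rewrite ?inE.
  - by case=> p; rewrite inE => Pp ->; apply/defA; exists p.
rewrite card_in_imset; last by move=> p q _ _ /f_inj eqf; apply/val_inj/eqf; rewrite inE.
rewrite cardsE cardE /enum_mem size_filter -enumT -val_enum_ord count_map.
exact: eq_count.
Qed.

Lemma rle_simple_root n (alpha beta : broot n) x : 0 < x <= n ->
  (forall j, 0 < j <= n ->
     (rvec beta j - rvec alpha j = Posz (j == x) - Posz (j == x.+1))%R) ->
  rle alpha beta.
Proof.
move=> ltx0n dab; exists (fun j => nat_of_bool (j == x)); split.
  by case/andP: ltx0n => gtx0 _; rewrite eq_sym gtn_eqF.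
by case=> [|j] lejn //; rewrite dab.
Qed.

Section RootCoordinates.
Variables (n x y : nat).
Hypotheses (lexn : x <= n) (leyn : y <= n).

Lemma rvec_rplus j :
  rvec (rplus (inord x) (inord y) : broot n) j = (Posz (j == x) + Posz (j == y))%R.
Proof. by rewrite /rvec /rplus !inordK. Qed.

Lemma rvec_rminus j :
  rvec (rminus (inord x) (inord y) : broot n) j = (Posz (j == x) - Posz (j == y))%R.
Proof. by rewrite /rvec /rminus !inordK. Qed.

Lemma rvec_rshort j : rvec (rshort (inord x) : broot n) j = Posz (j == x).
Proof. by rewrite /rvec /rshort !inordK. Qed.

End RootCoordinates.

Section Covers.
Variable n : nat.

(* The shifted index is passed as [x' = x.+1] so that [apply:] matches index expressions
   that are successors only up to arithmetic. *)

Lemma rle_rplus_succl x x' y : 0 < x -> x' = x.+1 -> x' <= n -> y <= n ->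
  rle (rplus (inord x') (inord y) : broot n) (rplus (inord x) (inord y)).
Proof.
move=> gtx0 -> lexn leyn; apply: (@rle_simple_root _ _ _ x); first lia.
by move=> j _; rewrite !rvec_rplus ?(ltnW lexn) //; ring.
Qed.

Lemma rle_rplus_succr x y y' : 0 < y -> y' = y.+1 -> x <= n -> y' <= n ->
  rle (rplus (inord x) (inord y') : broot n) (rplus (inord x) (inord y)).
Proof.
move=> gty0 -> lexn leyn; apply: (@rle_simple_root _ _ _ y); first lia.
by move=> j _; rewrite !rvec_rplus ?(ltnW leyn) //; ring.
Qed.

Lemma rle_rminus_succl x x' y : 0 < x -> x' = x.+1 -> x' <= n -> y <= n ->
  rle (rminus (inord x') (inord y) : broot n) (rminus (inord x) (inord y)).
Proof.
move=> gtx0 -> lexn leyn; apply: (@rle_simple_root _ _ _ x); first lia.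
by move=> j _; rewrite !rvec_rminus ?(ltnW lexn) //; ring.
Qed.

Lemma rle_rminus_succr x y y' : 0 < y -> y' = y.+1 -> x <= n -> y' <= n ->
  rle (rminus (inord x) (inord y) : broot n) (rminus (inord x) (inord y')).
Proof.
move=> gty0 -> lexn leyn; apply: (@rle_simple_root _ _ _ y); first lia.
by move=> j _; rewrite !rvec_rminus ?(ltnW leyn) //; ring.
Qed.

Lemma rle_rshort_succ x x' : 0 < x -> x' = x.+1 -> x' <= n ->
  rle (rshort (inord x') : broot n) (rshort (inord x)).
Proof.
move=> gtx0 -> lexn; apply: (@rle_simple_root _ _ _ x); first lia.
by move=> j _; rewrite !rvec_rshort ?(ltnW lexn) //; ring.
Qed.

Lemma rle_rminus_rshort x y : y = n -> 0 < n -> x <= n ->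
  rle (rminus (inord x) (inord y) : broot n) (rshort (inord x)).
Proof.
move=> -> gtn0 lexn; apply: (@rle_simple_root _ _ _ n); first lia.
move=> j lejn; rewrite rvec_rminus // rvec_rshort // (@ltn_eqF j n.+1); last lia.
by rewrite /=; ring.
Qed.

Lemma rle_rshort_rplus x y : y = n -> 0 < n -> x <= n ->
  rle (rshort (inord x) : broot n) (rplus (inord x) (inord y)).
Proof.
move=> -> gtn0 lexn; apply: (@rle_simple_root _ _ _ n); first lia.
move=> j lejn; rewrite rvec_rplus // rvec_rshort // (@ltn_eqF j n.+1); last lia.
by rewrite /=; ring.
Qed.

End Covers.

Section RowsAndColumns.
Variables n k : nat.

(* The base row of e_a, listed upwards in the root order:
   e_a - e_(k+1) < ... < e_a - e_n < e_a < e_a + e_n < ... < e_a + e_(k+1). *)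
Definition row_root (a p : nat) : broot n :=
  if p < n - k then rminus (inord a) (inord (k.+1 + p))
  else if p == n - k then rshort (inord a)
  else rplus (inord a) (inord (n + (n - k) + 1 - p)).

Definition row_index (r : broot n) : nat :=
  match r with
  | inl (inl (_, b)) => n + (n - k) + 1 - b
  | inl (inr (_, b)) => b - k.+1
  | inr _ => n - k
  end.

(* The top column of e_(k+1-i), listed upwards:
   e_(k-i) + e_(k+1-i) < ... < e_1 + e_(k+1-i). *)
Definition col_root (i t : nat) : broot n :=
  rplus (inord (k - i - t)) (inord (k.+1 - i)).

Lemma base_region_row (r : broot n) :
  base_region k r -> exists2 i, 0 < i <= k & base_row k i r.
Proof. by case: r => [[[a b]|[a b]]|a] /= regr; exists (k.+1 - a); lia. Qed.

Lemma top_region_col (r : broot n) :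
  top_region k r -> exists2 i, 0 < i <= k & top_col k i r.
Proof. by case: r => [[[a b]|[a b]]|a] //= topr; exists (k.+1 - b); lia. Qed.

Hypothesis ltkn : k < n.

Lemma row_rootK a p : p <= 2 * (n - k) -> row_index (row_root a p) = p.
Proof.
move=> lep; rewrite /row_root.
by case: ifP => lt1; last case: ifP => eq1; rewrite /= ?inordK; lia.
Qed.

Lemma row_root_inj a : {in gtn (2 * (n - k)).+1 &, injective (row_root a)}.
Proof. by move=> p q lep leq eqpq; rewrite -(row_rootK a lep) eqpq row_rootK. Qed.

Lemma row_root_in_row i p : 0 < i <= k -> p <= 2 * (n - k) ->
  base_row k i (row_root (k.+1 - i) p) && base_region k (row_root (k.+1 - i) p).
Proof.
move=> lei lep; rewrite /row_root.
by case: ifP => lt1; last case: ifP => eq1; rewrite /= ?inordK; lia.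
Qed.

Lemma base_rowP i (r : broot n) : 0 < i <= k -> base_row k i r ->
  exists2 p, p <= 2 * (n - k) & r = row_root (k.+1 - i) p.
Proof.
move=> lei; case: r => [[[a b]|[a b]]|a] /=; have := ltn_ord a; try have := ltn_ord b.
- move=> ltb lta /andP [/eqP eqa gtb]; exists (n + (n - k) + 1 - b); first lia.
  rewrite /row_root ifF; last lia.
  rewrite ifF; last lia.
  by congr (inl (inl (_, _))); apply: val_inj; rewrite /= inordK; lia.
- move=> ltb lta /andP [/eqP eqa gtb]; exists (b - k.+1); first lia.
  rewrite /row_root ifT; last lia.
  by congr (inl (inr (_, _))); apply: val_inj; rewrite /= inordK; lia.
- move=> lta /eqP eqa; exists (n - k); first lia.
  rewrite /row_root ltnn eqxx.
  by congr (inr _); apply: val_inj; rewrite /= inordK; lia.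
Qed.

Lemma col_root_in_col i t : 0 < i <= k -> t < k - i ->
  top_col k i (col_root i t) && top_region k (col_root i t).
Proof. by move=> lei ltt; rewrite /col_root /= !inordK; lia. Qed.

Lemma col_root_inj i : {in gtn (k - i) &, injective (col_root i)}.
Proof.
move=> t u; rewrite !inE => ltt ltu [] /(congr1 val); rewrite /= !inordK; lia.
Qed.

Lemma top_colP i (r : broot n) : 0 < i <= k -> top_col k i r ->
  exists2 t, t < k - i & r = col_root i t.
Proof.
move=> lei; case: r => [[[a b]|[a b]]|a] //=; have := ltn_ord a; have := ltn_ord b.
move=> ltb lta /andP [/andP [gta /eqP eqb] ltab]; exists (k - i - a); first lia.
by congr (inl (inl (_, _))); apply: val_inj; rewrite /= inordK; lia.
Qed.

Variable S : {set broot n}.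

Lemma lambda1_count i : 0 < i <= k ->
  lambda1 k S i = count (fun p => row_root (k.+1 - i) p \in S) (iota 0 (2 * (n - k)).+1).
Proof.
move=> lei; apply: (@card_param_count _ _ (row_root (k.+1 - i))); first exact: row_root_inj.
move=> r; rewrite inE; split.
- by case/andP=> Sr /(base_rowP lei) [p lep defr]; exists p; split; rewrite -?defr.
- by case=> p [lep -> Sp]; rewrite Sp; case/andP: (row_root_in_row lei lep).
Qed.

Lemma lambda2_count i : 0 < i <= k ->
  lambda2 k S i = count (fun t => col_root i t \in S) (iota 0 (k - i)).
Proof.
move=> lei; apply: (@card_param_count _ _ (col_root i)); first exact: col_root_inj.
move=> r; rewrite inE; split.
- by case/andP=> Sr /(top_colP lei) [t ltt defr]; exists t; split; rewrite -?defr.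
- by case=> t [ltt -> St]; rewrite St; case/andP: (col_root_in_col lei ltt).
Qed.

Lemma lambda1_le i : 0 < i <= k -> lambda1 k S i <= 2 * (n - k) + 1.
Proof. by move=> lei; rewrite lambda1_count // addn1 -[leqRHS](size_iota 0) count_size. Qed.

Lemma lambda2_le i : 0 < i <= k -> lambda2 k S i <= k - i.
Proof. by move=> lei; rewrite lambda2_count // -[leqRHS](size_iota 0) count_size. Qed.

End RowsAndColumns.

Section DiagramRowsAndColumns.
Variables (n k : nat) (S : {set broot n}).
Hypotheses (ltkn : k < n) (diagS : is_OG_diagram k S).

Lemma row_root_down i p : 0 < i <= k -> p < 2 * (n - k) ->
  row_root n k (k.+1 - i) p.+1 \in S -> row_root n k (k.+1 - i) p \in S.
Proof.
case: diagS => _ baseS _ _ lei ltp Sp; apply: (baseS _ _ _ _ Sp).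
- by case/andP: (row_root_in_row ltkn lei (ltnW ltp)).
- by case/andP: (row_root_in_row ltkn lei ltp).
rewrite /row_root; do 2 (case: ifP => ?); try case: ifP => ?; try case: ifP => ?;
  try (exfalso; lia);
  first [apply: rle_rminus_succr | apply: rle_rminus_rshort | apply: rle_rshort_rplus
        | apply: rle_rplus_succr]; lia.
Qed.

Lemma row_root_cross i p : 0 < i < k -> p <= 2 * (n - k) ->
  row_root n k (k.+1 - i.+1) p \in S -> row_root n k (k.+1 - i) p \in S.
Proof.
case: diagS => _ baseS _ _ lei lep Sp; apply: (baseS _ _ _ _ Sp).
- by case/andP: (@row_root_in_row n k ltkn i p ltac:(lia) lep).
- by case/andP: (@row_root_in_row n k ltkn i.+1 p ltac:(lia) lep).
rewrite /row_root; case: ifP => ?; try case: ifP => ?;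
  first [apply: rle_rminus_succl | apply: rle_rshort_succ | apply: rle_rplus_succl]; lia.
Qed.

Lemma col_root_down i t : 0 < i <= k -> t.+1 < k - i ->
  col_root n k i t.+1 \in S -> col_root n k i t \in S.
Proof.
case: diagS => _ _ topS _ lei ltt St; apply: (topS _ _ _ _ St).
- by case/andP: (col_root_in_col ltkn lei (ltnW ltt)).
- by case/andP: (col_root_in_col ltkn lei ltt).
by apply: rle_rplus_succl; lia.
Qed.

Lemma col_root_cross i t : 0 < i < k -> t.+1 < k - i ->
  col_root n k i.+1 t \in S -> col_root n k i t.+1 \in S.
Proof.
case: diagS => _ _ topS _ lei ltt St; apply: (topS _ _ _ _ St).
- by case/andP: (@col_root_in_col n k ltkn i t.+1 ltac:(lia) ltt).
- by case/andP: (@col_root_in_col n k ltkn i.+1 t ltac:(lia) ltac:(lia)).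
by rewrite /col_root (_ : k - i.+1 - t = k - i - t.+1); [apply: rle_rplus_succr | ]; lia.
Qed.

Lemma mem_row_root i p : 0 < i <= k -> p <= 2 * (n - k) ->
  (row_root n k (k.+1 - i) p \in S) = (p < lambda1 k S i).
Proof.
move=> lei lep; rewrite (lambda1_count ltkn S lei).
by apply: count_downclosed => // q ltq; apply: row_root_down.
Qed.

Lemma mem_col_root i t : 0 < i <= k -> t < k - i ->
  (col_root n k i t \in S) = (t < lambda2 k S i).
Proof.
move=> lei ltt; rewrite (lambda2_count ltkn S lei).
by apply: count_downclosed => // q ltq; apply: col_root_down.
Qed.

Lemma col_root_top_rule i t : 0 < i <= k -> t < k - i ->
  let m := lambda1 k S (i + 1 + t) + lambda1 k S i in
  (2 * (n - k) + 1 < m -> col_root n k i t \in S) /\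
  (m < 2 * (n - k) + 1 -> col_root n k i t \notin S).
Proof.
case: diagS => _ _ _ topS lei ltt.
have lta : 1 <= (inord (k - i - t) : 'I_n.+1) by rewrite inordK; lia.
have ltab : (inord (k - i - t) : 'I_n.+1) < (inord (k.+1 - i) : 'I_n.+1).
  by rewrite !inordK; lia.
have leb : (inord (k.+1 - i) : 'I_n.+1) <= k by rewrite inordK; lia.
have := topS _ _ lta ltab leb; rewrite /= !inordK; try lia.
have -> : k.+1 - (k - i - t) = i + 1 + t by lia.
have -> : k.+1 - (k.+1 - i) = i by lia.
by have -> : 2 * n + 1 - 2 * k = 2 * (n - k) + 1 by lia.
Qed.

Lemma lambda1_succ_le i : 0 < i < k -> lambda1 k S i.+1 <= lambda1 k S i.
Proof.
move=> lti; case: (posnP (lambda1 k S i.+1)) => [-> // | gt0].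
have lei1 : 0 < i.+1 <= k by lia.
have lep : (lambda1 k S i.+1).-1 <= 2 * (n - k) by have := lambda1_le ltkn S lei1; lia.
have inrow : row_root n k (k.+1 - i.+1) (lambda1 k S i.+1).-1 \in S.
  by rewrite mem_row_root // prednK.
have := row_root_cross lti lep inrow.
by rewrite mem_row_root ?prednK //; lia.
Qed.

Lemma lambda2_succ_lt i : 0 < i < k -> 0 < lambda2 k S i.+1 ->
  lambda2 k S i.+1 < lambda2 k S i.
Proof.
move=> lti gt0; have lei1 : 0 < i.+1 <= k by lia.
have ltt : (lambda2 k S i.+1).-1 < k - i.+1 by have := lambda2_le ltkn S lei1; lia.
have incol : col_root n k i.+1 (lambda2 k S i.+1).-1 \in S.
  by rewrite mem_col_root // prednK.
have ltt1 : (lambda2 k S i.+1).-1.+1 < k - i by lia.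
have := col_root_cross lti ltt1 incol.
by rewrite mem_col_root ?prednK //; lia.
Qed.

Lemma lambda2_gt0 i : 0 < i < k ->
  2 * (n - k) + 1 < lambda1 k S i.+1 + lambda1 k S i -> 0 < lambda2 k S i.
Proof.
move=> lti big; have lei : 0 < i <= k by lia.
have lt0 : 0 < k - i by lia.
rewrite -(mem_col_root lei lt0); apply: (col_root_top_rule lei lt0).1.
by rewrite addn0 (addn1 i).
Qed.

End DiagramRowsAndColumns.

Lemma size_fk n k (S : {set broot n}) : size (fk k S) = k.
Proof. by rewrite size_map size_iota. Qed.

Lemma nth_fk n k (S : {set broot n}) i : i < k ->
  nth 0 (fk k S) i = lambda1 k S i.+1 + lambda2 k S i.+1.
Proof. by move=> lti; rewrite (nth_map 0) ?size_iota // nth_iota // add1n. Qed.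

Lemma fk_in_P n k (S : {set broot n}) : k < n -> is_OG_diagram k S -> in_P n k (fk k S).
Proof.
move=> ltkn diagS; split; first exact: size_fk.
- apply/(sortedP 0) => i; rewrite size_fk => lti.
  have lti1 : 0 < i.+1 < k by lia.
  rewrite !nth_fk //; last exact: ltnW.
  have := lambda1_succ_le ltkn diagS lti1; have := lambda2_succ_lt ltkn diagS lti1; lia.
- case: (posnP k) => [k0 | gtk0]; first by rewrite nth_default ?size_fk ?k0.
  have le1 : 0 < 1 <= k by lia.
  by rewrite nth_fk //; have := lambda1_le ltkn S le1; have := lambda2_le ltkn S le1; lia.
- move=> i lti; have lti1 : 0 < i.+1 < k by lia.
  rewrite !nth_fk //; last exact: ltnW.
  have := lambda1_succ_le ltkn diagS lti1; have := lambda2_succ_lt ltkn diagS lti1.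
  have := lambda2_gt0 ltkn diagS lti1; lia.
Qed.

Lemma lambda1_le_of_sum n k (S T : {set broot n}) i :
  k < n -> is_OG_diagram k S -> is_OG_diagram k T -> 0 < i <= k ->
  (forall j, i < j <= k -> lambda1 k S j = lambda1 k T j) ->
  lambda1 k S i + lambda2 k S i = lambda1 k T i + lambda2 k T i ->
  lambda1 k S i <= lambda1 k T i.
Proof.
move=> ltkn diagS diagT lei eq_above eq_sum; rewrite leqNgt; apply/negP => ltST.
suff : lambda2 k T i <= lambda2 k S i by lia.
case: (posnP (lambda2 k T i)) => [-> // | gt0].
have ltt : (lambda2 k T i).-1 < k - i by have := lambda2_le ltkn T lei; lia.
have inT : col_root n k i (lambda2 k T i).-1 \in T.
  by rewrite (mem_col_root ltkn diagT) // prednK.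
rewrite -[lambda2 k T i](prednK gt0) -(mem_col_root ltkn diagS) //.
have [inS _] := col_root_top_rule ltkn diagS lei ltt.
have [_ notinT] := col_root_top_rule ltkn diagT lei ltt.
have big_T :
    2 * (n - k) + 1 <= lambda1 k T (i + 1 + (lambda2 k T i).-1) + lambda1 k T i.
  by rewrite leqNgt; apply: contraTN inT; exact: notinT.
by apply: inS; rewrite eq_above; lia.
Qed.

Lemma lambda1_eq_of_sums n k (S T : {set broot n}) :
  k < n -> is_OG_diagram k S -> is_OG_diagram k T ->
  (forall i, 0 < i <= k -> lambda1 k S i + lambda2 k S i = lambda1 k T i + lambda2 k T i) ->
  forall i, 0 < i <= k -> lambda1 k S i = lambda1 k T i.
Proof.
move=> ltkn diagS diagT eq_sum.
suff eq_d : forall d i, 0 < i <= k -> k - i < d -> lambda1 k S i = lambda1 k T i.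
  by move=> i lei; apply: (eq_d k.+1) => //; lia.
elim=> [// | d IH] i lei ltd.
have eq_above j : i < j <= k -> lambda1 k S j = lambda1 k T j by move=> ltj; apply: IH; lia.
have le_ST := lambda1_le_of_sum ltkn diagS diagT lei eq_above (eq_sum i lei).
have le_TS : lambda1 k T i <= lambda1 k S i.
  apply: (lambda1_le_of_sum ltkn diagT diagS lei _ (esym (eq_sum i lei))).
  by move=> j ltj; rewrite eq_above.
by apply/eqP; rewrite eqn_leq le_ST le_TS.
Qed.

Lemma fk_inj n k (S T : {set broot n}) : k < n ->
  is_OG_diagram k S -> is_OG_diagram k T -> fk k S = fk k T -> S = T.
Proof.
move=> ltkn diagS diagT eq_fk.
have eq_sum i : 0 < i <= k ->
    lambda1 k S i + lambda2 k S i = lambda1 k T i + lambda2 k T i.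
  by move=> lei; have := congr1 (nth 0 ^~ i.-1) eq_fk; rewrite !nth_fk ?prednK //; lia.
have eq1 := lambda1_eq_of_sums ltkn diagS diagT eq_sum.
have eq2 i : 0 < i <= k -> lambda2 k S i = lambda2 k T i.
  by move=> lei; have := eq_sum i lei; rewrite eq1 //; lia.
apply/setP => r; case: (boolP (base_region k r)) => [baser | notbase].
  have [i lei /(base_rowP ltkn lei) [p lep ->]] := base_region_row baser.
  by rewrite (mem_row_root ltkn diagS) // (mem_row_root ltkn diagT) // eq1.
case: (boolP (top_region k r)) => [topr | nottop].
  have [i lei /(top_colP ltkn lei) [t ltt ->]] := top_region_col topr.
  by rewrite (mem_col_root ltkn diagS) // (mem_col_root ltkn diagT) // eq2.
case: diagS diagT => regS _ _ _ [regT _ _ _].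
by apply/idP/idP => [/regS | /regT]; rewrite (negbTE notbase) (negbTE nottop).
Qed.

Theorem lemma3p8 (n k : nat) (hk : (1 <= k)%N) (hkn : (k < n)%N) :
  (forall S : {set broot n}, is_OG_diagram k S -> in_P n k (fk k S)) /\
  (forall S T : {set broot n}, is_OG_diagram k S -> is_OG_diagram k T ->
     fk k S = fk k T -> S = T).
Proof. by split=> [S | S T]; [apply: fk_in_P | apply: fk_inj]. Qed.
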